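(* Let $x$ be a grid function with $x_s\neq 0$ at every node that satisfies the scheme (S) with $\check B\equiv 0$. Then at every node the discrete energy conservation law $$\frac12\Big(x_t^2+x_s^{-1}+\hat x_s^{-1}+\alpha^2x_s\hat x_s\Big)_{\check t}+\frac12\Big((x_t^++\check x_t^+)\big((\hat x_s\check x_s)^{-1}-\alpha^2x_s\big)\Big)_{\bar s}=0$$ holds. Equivalently, the left-hand side equals $\frac{x_t+\check x_t}{2}$ times the left-hand side of (S), for any grid function $x$ with $x_s\ne0$.
   Context: Fix mesh steps $\tau>0$, $h>0$ and a constant $\alpha\in\mathbb R$. A grid function is a real-valued function $f=f(t,s)$ on the uniform orthogonal mesh $\{(n\tau,kh): n,k\in\mathbb Z\}$; at the node $(n\tau,kh)$ the symbol $t$ denotes the number $n\tau$. Shifts: $\hat f=f(t+\tau,s)$, $\check f=f(t-\tau,s)$, $f^+=f_+=f(t,s+h)$, $f^-=f_-=f(t,s-h)$; a shift applied to a composite expression shifts the whole expression (e.g. $\hat x_s$ is $x_s$ evaluated at $(t+\tau,s)$, $\check x_t$ is $x_t$ evaluated at $(t-\tau,s)$, $x_t^+$ is $x_t$ evaluated at $(t,s+h)$, $\check x_t^+$ is $x_t$ evaluated at $(t-\tau,s+h)$). Differences: $f_t=(\hat f-f)/\tau$, $f_{\check t}=(f-\check f)/\tau$, $f_s=(f_+-f)/h$, $f_{\bar s}=(f-f_-)/h$; iterated differences compose, e.g. $x_{t\check t}=(x_t)_{\check t}=(\hat x-2x+\check x)/\tau^2$ and $x_{s\bar s}=(x_s)_{\bar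 s}=(x_+-2x+x_-)/h^2$. Given a grid function $x$ with $x_s\neq0$ everywhere and a grid function $\check B$ (an approximation of the bottom-slope term), the scheme (S) is the requirement that at every node $$x_{t\check t}-\alpha^2x_{s\bar s}+\Big(\frac{1}{\hat x_s\check x_s}\Big)_{\bar s}-\check B=0 .$$ *)

From Stdlib Require Import Reals ZArith.
Open Scope R_scope.

(* A grid function on the mesh {(n tau, k h) : n,k in Z}, indexed by (n,k). *)
Definition grid := Z -> Z -> R.

Definition hat (f : grid) : grid := fun n k => f (n + 1)%Z k.
Definition chk (f : grid) : grid := fun n k => f (n - 1)%Z k.
Definition splus (f : grid) : grid := fun n k => f n (k + 1)%Z.
Definition sminus (f : grid) : grid := fun n k => f n (k - 1)%Z.

Definition dt (tau : R) (f : grid) : grid := fun n k => (hat f n k - f n k) / tau.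
Definition dtb (tau : R) (f : grid) : grid := fun n k => (f n k - chk f n k) / tau.
Definition ds (h : R) (f : grid) : grid := fun n k => (splus f n k - f n k) / h.
Definition dsb (h : R) (f : grid) : grid := fun n k => (f n k - sminus f n k) / h.

Definition scheme_lhs (tau h alpha : R) (x B_chk : grid) : grid :=
  fun n k =>
    dtb tau (dt tau x) n k
    - alpha ^ 2 * dsb h (ds h x) n k
    + dsb h (fun n' k' => / (hat (ds h x) n' k' * chk (ds h x) n' k')) n k
    - B_chk n k.

Definition energy (tau h alpha : R) (x : grid) : grid :=
  fun n k =>
    / 2 * (dt tau x n k ^ 2 + / ds h x n k + / hat (ds h x) n k
           + alpha ^ 2 * ds h x n k * hat (ds h x) n k).

Definition flux (tau h alpha : R) (x : grid) : grid :=
  fun n k =>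
    / 2 * (splus (dt tau x) n k + splus (chk (dt tau x)) n k)
        * (/ (hat (ds h x) n k * chk (ds h x) n k) - alpha ^ 2 * ds h x n k).

Definition conservation_lhs (tau h alpha : R) (x : grid) : grid :=
  fun n k => dtb tau (energy tau h alpha x) n k + dsb h (flux tau h alpha x) n k.

From Stdlib Require Import Reals ZArith Lra.
Open Scope R_scope.

(* The conservation law is the discrete analogue of multiplying the equation
   x_tt - alpha^2 x_ss + (1/x_s^2)_s = 0 by the velocity and integrating by
   parts.  Write G = (x_t + check x_t)/2 for the mean velocity and
   P = (hat x_s check x_s)^{-1} - alpha^2 x_s for the stress, so that the
   flux is G^+ P and the scheme (S) with check B = 0 reads x_{t check t} + P_{bar s}.
   The proof combines three local identities:
   - a discrete Leibniz rule: (G^+ P)_{bar s} = G P_{bar s} + G_s P;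
   - kinetic balance: (x_t^2 / 2)_{check t} = G x_{t check t};
   - potential balance: with W = (x_s^{-1} + hat x_s^{-1} + alpha^2 x_s hat x_s)/2,
     W_{check t} + G_s P = 0, using G_s = (hat x_s - check x_s)/(2 tau)
     (the mixed differences commute); only here is x_s <> 0 needed.
   Summing them, the conservation left-hand side equals G times (S), which is
   the identity of the theorem; the conservation law follows when (S) holds. *)

Lemma dtb_ext (tau : R) (f g : grid) (n k : Z) :
  (forall n k, f n k = g n k) -> dtb tau f n k = dtb tau g n k.
Proof. intros Hfg. unfold dtb, chk. rewrite !Hfg. reflexivity. Qed.

Lemma dsb_ext (h : R) (f g : grid) (n k : Z) :
  (forall n k, f n k = g n k) -> dsb h f n k = dsb h g n k.
Proof. intros Hfg. unfold dsb, sminus. rewrite !Hfg. reflexivity. Qed.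

Lemma dtb_add (tau : R) (f g : grid) (n k : Z) :
  dtb tau (fun n k => f n k + g n k) n k = dtb tau f n k + dtb tau g n k.
Proof. unfold dtb, chk, Rdiv. ring. Qed.

Lemma dsb_shifted_product (h : R) (G P : grid) (n k : Z) :
  dsb h (fun n k => splus G n k * P n k) n k
  = G n k * dsb h P n k + ds h G n k * P n k.
Proof. unfold dsb, ds, splus, sminus, Rdiv. rewrite Z.sub_add. ring. Qed.

(* An elementary rational identity behind the potential balance:
   u, v, w stand for check x_s, x_s, hat x_s. *)
Lemma potential_balance_real (tau alpha u v w : R) :
  tau <> 0 -> u <> 0 -> v <> 0 -> w <> 0 ->
  (/ 2 * (/ v + / w + alpha ^ 2 * v * w)
   - / 2 * (/ u + / v + alpha ^ 2 * u * v)) / tau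
  + (w - u) / (2 * tau) * (/ (w * u) - alpha ^ 2 * v) = 0.
Proof. intros Htau Hu Hv Hw. field. repeat split; assumption. Qed.

Section EnergyBalance.

Variables tau h alpha : R.
Hypothesis tau_neq0 : tau <> 0.
Hypothesis h_neq0 : h <> 0.
Variable x : grid.

Definition mean_velocity : grid :=
  fun n k => (dt tau x n k + chk (dt tau x) n k) / 2.

Definition stress : grid :=
  fun n k => / (hat (ds h x) n k * chk (ds h x) n k) - alpha ^ 2 * ds h x n k.

Definition potential : grid :=
  fun n k => / 2 * (/ ds h x n k + / hat (ds h x) n k
                    + alpha ^ 2 * ds h x n k * hat (ds h x) n k).

Lemma energy_split (n k : Z) :
  energy tau h alpha x n k = / 2 * dt tau x n k ^ 2 + potential n k.
Proof. unfold energy, potential. ring. Qed.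

Lemma flux_split (n k : Z) :
  flux tau h alpha x n k = splus mean_velocity n k * stress n k.
Proof. unfold flux, mean_velocity, stress, splus, Rdiv. ring. Qed.

Lemma dsb_stress (n k : Z) :
  dsb h stress n k
  = dsb h (fun n k => / (hat (ds h x) n k * chk (ds h x) n k)) n k
    - alpha ^ 2 * dsb h (ds h x) n k.
Proof. unfold dsb, stress, sminus, Rdiv. ring. Qed.

Lemma kinetic_balance (n k : Z) :
  dtb tau (fun n k => / 2 * dt tau x n k ^ 2) n k
  = mean_velocity n k * dtb tau (dt tau x) n k.
Proof. unfold dtb, mean_velocity, chk, Rdiv. ring. Qed.

(* The mixed differences commute, so G_s is a centred time difference of x_s. *)
Lemma ds_mean_velocity (n k : Z) :
  ds h mean_velocity n k = (hat (ds h x) n k - chk (ds h x) n k) / (2 * tau).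
Proof.
  unfold ds, mean_velocity, dt, hat, chk, splus.
  rewrite Z.sub_add. field. split; assumption.
Qed.

Lemma potential_balance (n k : Z) :
  chk (ds h x) n k <> 0 -> ds h x n k <> 0 -> hat (ds h x) n k <> 0 ->
  dtb tau potential n k + ds h mean_velocity n k * stress n k = 0.
Proof.
  intros Hchk Hcur Hhat.
  rewrite ds_mean_velocity.
  unfold dtb, potential, stress, chk, hat in *.
  rewrite Z.sub_add.
  exact (potential_balance_real tau alpha _ _ _ tau_neq0 Hchk Hcur Hhat).
Qed.

Theorem conservation_identity :
  (forall n k, ds h x n k <> 0) ->
  forall n k, conservation_lhs tau h alpha x n k =
    mean_velocity n k * scheme_lhs tau h alpha x (fun _ _ => 0) n k.
Proof.
  intros Hxs n k.
  assert (Hpot : dtb tau potential n k + ds h mean_velocity n k * stress n k = 0)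
    by (apply potential_balance; apply Hxs).
  unfold conservation_lhs.
  rewrite (dtb_ext _ _ _ _ _ energy_split), dtb_add, kinetic_balance.
  rewrite (dsb_ext _ _ _ _ _ flux_split), dsb_shifted_product, dsb_stress.
  unfold scheme_lhs. lra.
Qed.

End EnergyBalance.

Theorem mainTheorem3 (tau h alpha : R) (Htau : 0 < tau) (Hh : 0 < h) :
  (* discrete energy conservation for solutions of (S) with check B = 0 *)
  (forall x : grid,
     (forall n k, ds h x n k <> 0) ->
     (forall n k, scheme_lhs tau h alpha x (fun _ _ => 0) n k = 0) ->
     forall n k, conservation_lhs tau h alpha x n k = 0) /\
  (* the underlying identity, for any x with x_s <> 0 *)
  (forall x : grid,
     (forall n k, ds h x n k <> 0) ->
     forall n k, conservation_lhs tau h alpha x n k =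
       (dt tau x n k + chk (dt tau x) n k) / 2
       * scheme_lhs tau h alpha x (fun _ _ => 0) n k).
Proof.
  assert (Htau0 : tau <> 0) by lra.
  assert (Hh0 : h <> 0) by lra.
  split.
  - intros x Hxs HS n k.
    rewrite (conservation_identity tau h alpha Htau0 Hh0 x Hxs), HS.
    apply Rmult_0_r.
  - exact (conservation_identity tau h alpha Htau0 Hh0).
Qed.
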